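(* Let $X$ be a dendric shift over $\mathcal{A}_3=\{1,2,3\}$ and let $Y$ be the image of $X$ under a morphism $\sigma\in\mathcal{S}_3$. Then $Y$ is dendric if and only if $\sigma\in\mathrm{DP}(X)$.
   Context: A shift space over $\mathcal{A}$ is a closed shift-invariant $X\subseteq\mathcal{A}^{\mathbb{Z}}$ in which all letters occur, with factor set $\mathcal{L}(X)$. For $w\in\mathcal{L}(X)$, $\mathcal{E}_X(w)$ is the bipartite graph with left vertices $\{a:aw\in\mathcal{L}(X)\}$, right vertices $\{b:wb\in\mathcal{L}(X)\}$, edges $\{a,b\}$ for $awb\in\mathcal{L}(X)$; $w$ is bispecial if it has at least two left and two right vertices, dendric if $\mathcal{E}_X(w)$ is a tree; $X$ is dendric if all its factors are dendric. $\mathcal{S}_3=\{\alpha,\beta,\gamma,\eta\}\cup\{\delta^{(k)},\zeta^{(k)}:k\ge1\}$ with $\alpha:1\mapsto1,2\mapsto12,3\mapsto13$; $\beta:1\mapsto1,2\mapsto12,3\mapsto132$; $\gamma:1\mapsto1,2\mapsto12,3\mapsto123$; $\delta^{(k)}:1\mapsto1,2\mapsto123^k,3\mapsto123^{k+1}$; $\zeta^{(k)}:1\mapsto13^k,2\mapsto12,3\mapsto13^{k+1}$; $\eta:1\mapsto13,2\mapsto12,3\mapsto123$. The image of $X$ under $\sigma$ is $Y=\{S^k\sigma(x):x\in X,0\le k<|\sigma(x_0)|\}$. For non-empty $u\in\mathcal{L}(Y)$ containing $1$ there is a unique triple $(s,v,p)$, $v\in\mathcal{L}(X)$, $u=s\sigma(v)p$,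 with $s$ a proper suffix of $\sigma(a)$ and $p$ a non-empty prefix of $\sigma(b)$ for some $a,b$ with $avb\in\mathcal{L}(X)$; $u$ is an extended image of $v$. $\mathrm{DP}(X)$ is the set of $\sigma\in\mathcal{S}_3$ such that for every $v\in\mathcal{L}(X)$, every bispecial extended image of $v$ under $\sigma$ is dendric in $Y$. *)

From mathcomp Require Import all_boot all_algebra.
Set Implicit Arguments. Unset Strict Implicit. Unset Printing Implicit Defensive.

(* Alphabet A_3 = {1,2,3}, encoded as 'I_3 with letter i+1 represented by i. *)
Definition letter := 'I_3.
Definition l1 : letter := @Ordinal 3 0 isT.
Definition l2 : letter := @Ordinal 3 1 isT.
Definition l3 : letter := @Ordinal 3 2 isT.

Definition word := seq letter.
Definition config := int -> letter.
Definition subshift := config -> Prop.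

Definition shift (x : config) : config := fun n => x (n + 1)%R.
Definition shiftn (k : nat) (x : config) : config := fun n => x (n + k%:Z)%R.

Definition occurs_at (w : word) (x : config) (i : int) : Prop :=
  forall k : nat, k < size w -> nth l1 w k = x (i + k%:Z)%R.

Definition lang (X : subshift) (w : word) : Prop :=
  exists x, X x /\ exists i, occurs_at w x i.

(* closedness in the product topology: every x whose central windows all
   agree with some element of X belongs to X *)
Definition closed_sub (X : subshift) : Prop :=
  forall x : config,
    (forall n : nat, exists y, X y /\ forall i : int, (`|i| <= n)%N -> y i = x i) ->
    X x.

Definition shift_invariant (X : subshift) : Prop :=
  forall x, X x <-> X (shift x).

Definition shift_space (X : subshift) : Prop :=
  [/\ closed_sub X, shift_invariant X & forall a : letter, lang X [:: a]].

(* vertices: inl a (left copy), inr b (right copy) *)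
Definition vtx := (letter + letter)%type.

Definition is_vertex (X : subshift) (w : word) (v : vtx) : Prop :=
  match v with
  | inl a => lang X (a :: w)
  | inr b => lang X (rcons w b)
  end.

Definition ext_edge (X : subshift) (w : word) (u v : vtx) : Prop :=
  match u, v with
  | inl a, inr b => lang X (a :: rcons w b)
  | inr b, inl a => lang X (a :: rcons w b)
  | _, _ => False
  end.

Fixpoint ppath (T : Type) (e : T -> T -> Prop) (x : T) (p : seq T) : Prop :=
  match p with
  | [::] => True
  | y :: p' => e x y /\ ppath e y p'
  end.

Definition graph_connected (V : vtx -> Prop) (e : vtx -> vtx -> Prop) : Prop :=
  forall u v, V u -> V v ->
    exists p : seq vtx, ppath e u p /\ last u p = v.

Definition graph_acyclic (V : vtx -> Prop) (e : vtx -> vtx -> Prop) : Prop :=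
  ~ exists (x : vtx) (p : seq vtx),
      [/\ V x, (forall y, y \in p -> V y), uniq (x :: p), 2 < size (x :: p)
        & ppath e x (rcons p x)].

Definition is_tree (V : vtx -> Prop) (e : vtx -> vtx -> Prop) : Prop :=
  graph_connected V e /\ graph_acyclic V e.

Definition dendric_word (X : subshift) (w : word) : Prop :=
  is_tree (is_vertex X w) (ext_edge X w).

Definition bispecial (X : subshift) (w : word) : Prop :=
  (exists a a' : letter, a != a' /\ lang X (a :: w) /\ lang X (a' :: w)) /\
  (exists b b' : letter, b != b' /\ lang X (rcons w b) /\ lang X (rcons w b')).

Definition dendric_shift (X : subshift) : Prop :=
  forall w, lang X w -> dendric_word X w.

Inductive S3 : Type :=
| Alpha | Beta | Gamma | Eta
| Delta of nat   (* Delta k = delta^(k), requires k >= 1 *)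
| Zeta of nat.   (* Zeta k  = zeta^(k),  requires k >= 1 *)

Definition in_S3 (s : S3) : bool :=
  match s with Delta k | Zeta k => 0 < k | _ => true end.

Definition morph (s : S3) (a : letter) : word :=
  match s with
  | Alpha => if a == l1 then [:: l1] else if a == l2 then [:: l1; l2] else [:: l1; l3]
  | Beta  => if a == l1 then [:: l1] else if a == l2 then [:: l1; l2] else [:: l1; l3; l2]
  | Gamma => if a == l1 then [:: l1] else if a == l2 then [:: l1; l2] else [:: l1; l2; l3]
  | Eta   => if a == l1 then [:: l1; l3] else if a == l2 then [:: l1; l2] else [:: l1; l2; l3]
  | Delta k => if a == l1 then [:: l1] else if a == l2 then [:: l1, l2 & nseq k l3]
               else [:: l1, l2 & nseq k.+1 l3]
  | Zeta k => if a == l1 then l1 :: nseq k l3 else if a == l2 then [:: l1; l2]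
              else l1 :: nseq k.+1 l3
  end.

Definition morphw (s : S3) (v : word) : word := flatten (map (morph s) v).

(* letter at position n of f 0 ++ f 1 ++ f 2 ++ ... (blocks assumed nonempty) *)
Fixpoint nthcat (f : nat -> word) (fuel n : nat) : letter :=
  match fuel with
  | 0 => l1
  | fuel'.+1 =>
      if n < size (f 0) then nth l1 (f 0) n
      else nthcat (fun i => f i.+1) fuel' (n - size (f 0))
  end.

(* sigma(x) = ... sigma(x_{-1}) . sigma(x_0) sigma(x_1) ..., with sigma(x_0)
   starting at position 0 *)
Definition morphx (s : S3) (x : config) : config := fun n =>
  match n with
  | Posz m => nthcat (fun i => morph s (x (Posz i))) m.+1 m
  | Negz m => nthcat (fun i => rev (morph s (x (- Posz i.+1)%R))) m.+1 m
  end.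

Definition morph_image (s : S3) (X : subshift) : subshift := fun y =>
  exists x, X x /\ exists k : nat, k < size (morph s (x 0)) /\
    forall n, y n = shiftn k (morphx s x) n.

Definition ext_image (s : S3) (X : subshift) (u v : word) : Prop :=
  [/\ u != [::], lang (morph_image s X) u, l1 \in u &
   exists (a b : letter) (sf pf : word),
     [/\ lang X (a :: rcons v b),
         (exists t, t != [::] /\ morph s a = t ++ sf),
         (pf != [::] /\ exists t, morph s b = pf ++ t)
       & u = sf ++ morphw s v ++ pf]].

Definition DP (X : subshift) (s : S3) : Prop :=
  forall v, lang X v -> forall u, ext_image s X u v ->
    bispecial (morph_image s X) u -> dendric_word (morph_image s X) u.

(* If Y is dendric, so are in particular the extended images, which are
   factors of Y.  Conversely, let w be a factor of Y.  If w is not bispecial,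
   one side of its extension graph has a single vertex and the graph is a
   star.  If w contains 1, it desubstitutes as s sigma(v) p, an extended image
   of a factor v of X, because 1 occurs in every sigma(c) exactly once, as its
   first letter; then DP(X) applies.  If w avoids 1, every occurrence of a w b
   in Y lies in a block sigma(c) 1, so the extension graph of w depends on
   sigma alone.  For alpha, beta, gamma and eta such a w has length at most 2
   and the finitely many graphs are checked by computation; for delta^(k) and
   zeta^(k), either w contains 2, which is always preceded by 1, or w = 3^j,
   whose graph only depends on how j compares with 0, k and k + 1. *)

From Stdlib Require Import Classical_Prop.
From mathcomp Require Import all_boot all_algebra zify.
Set Implicit Arguments. Unset Strict Implicit. Unset Printing Implicit Defensive.

Lemma nth_cat_middle (T : Type) (x0 : T) L u R k :
  k < size u -> nth x0 (L ++ u ++ R) (size L + k) = nth x0 u k.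
Proof. by move=> ltk; rewrite nth_cat ltnNge leq_addr /= addKn nth_cat ltk. Qed.

Section Language.
Variable Z : subshift.

Lemma lang_infix u w : infix u w -> lang Z w -> lang Z u.
Proof.
move=> /infixP [L [R ->]] [x [Zx [i occ]]]; exists x; split => //.
exists (i + Posz (size L))%R => k ltk.
rewrite -(nth_cat_middle l1 L R ltk) occ; last by rewrite !size_cat ltn_add2l ltn_addr.
by rewrite PoszD GRing.addrA.
Qed.

Lemma lang_behead a w : lang Z (a :: w) -> lang Z w.
Proof. exact/lang_infix/infix_cons. Qed.

Lemma lang_belast w b : lang Z (rcons w b) -> lang Z w.
Proof. exact/lang_infix/infix_rcons. Qed.

Lemma lang_extl w : lang Z w -> exists a, lang Z (a :: w).
Proof.
move=> [x [Zx [i occ]]]; exists (x (i - 1)%R), x; split => //.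
exists (i - 1)%R => -[|k] /= ltk; first by congr x; lia.
by rewrite occ //; congr x; lia.
Qed.

Lemma lang_extr w : lang Z w -> exists b, lang Z (rcons w b).
Proof.
move=> [x [Zx [i occ]]]; exists (x (i + Posz (size w))%R), x; split => //.
exists i => k; rewrite size_rcons nth_rcons ltnS leq_eqVlt => /orP [/eqP ->|ltk].
  by rewrite ltnn eqxx.
by rewrite ltk occ.
Qed.

End Language.

Lemma morph_head s a : exists2 t, morph s a = l1 :: t & l1 \notin t.
Proof.
by case: s => [||||k|k]; rewrite /morph; do 2?case: ifP => _;
  eexists; rewrite ?inE ?mem_nseq //; case: k.
Qed.

Lemma size_morph_gt0 s a : 0 < size (morph s a).
Proof. by have [t ->] := morph_head s a. Qed.

Lemma morphw_cons s a v : morphw s (a :: v) = morph s a ++ morphw s v.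
Proof. by []. Qed.

Lemma morphw_cat s v1 v2 : morphw s (v1 ++ v2) = morphw s v1 ++ morphw s v2.
Proof. by rewrite /morphw map_cat flatten_cat. Qed.

Lemma size_morphw s v : size v <= size (morphw s v).
Proof.
elim: v => //= a v IHv; rewrite morphw_cons size_cat.
by have := size_morph_gt0 s a; lia.
Qed.

Lemma mkseqSl (T : Type) (f : nat -> T) n :
  mkseq f n.+1 = f 0 :: mkseq (fun i => f i.+1) n.
Proof. by rewrite /mkseq /= -[1]addn0 iotaDl -map_comp. Qed.

Lemma nthcat_flatten f fuel N n : (forall i, 0 < size (f i)) -> n < fuel ->
  n < size (flatten (mkseq f N)) -> nthcat f fuel n = nth l1 (flatten (mkseq f N)) n.
Proof.
elim: fuel f n N => [//|fuel IHfuel] f n [//|N] f_gt0 lt_n_fuel.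
rewrite mkseqSl /= nth_cat size_cat; case: ifP => // ltnNf lt_n.
by apply: IHfuel => //; have := f_gt0 0; lia.
Qed.

Definition lwindow (x : config) N := mkseq (fun j => x (Posz j - Posz N)%R) N.
Definition rwindow (x : config) N := mkseq (fun j => x (Posz j)) N.
Definition window (x : config) N := lwindow x N ++ rwindow x N.

Lemma size_window x N : size (window x N) = N + N.
Proof. by rewrite size_cat !size_mkseq. Qed.

Lemma nth_window x N j : j < N + N -> nth l1 (window x N) j = x (Posz j - Posz N)%R.
Proof.
move=> ltj; rewrite nth_cat size_mkseq; case: ifP => ltjN; rewrite nth_mkseq //; last lia.
by congr x; lia.
Qed.

Lemma rev_lwindow x N : rev (lwindow x N) = mkseq (fun i => x (- Posz i.+1)%R) N.
Proof.
elim: N => [//|N IHN]; rewrite /lwindow mkseqSl rev_cons mkseqS -IHN.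
by congr (rcons (rev _) _); [apply: eq_mkseq => i | ]; congr x; lia.
Qed.

Lemma morphx_window s x N m : m < size (morphw s (window x N)) ->
  morphx s x (Posz m - Posz (size (morphw s (lwindow x N))))%R =
  nth l1 (morphw s (window x N)) m.
Proof.
rewrite morphw_cat size_cat nth_cat.
set Wl := morphw s (lwindow x N); set Wr := morphw s (rwindow x N).
case: ifP => ltmWl ltm.
- have -> : (Posz m - Posz (size Wl))%R = Negz (size Wl - m.+1) by rewrite NegzE; lia.
  have revWl : flatten (mkseq (fun i => rev (morph s (x (- Posz i.+1)%R))) N) = rev Wl.
    by rewrite /Wl /morphw rev_flatten -map_rev -(map_rev (morph s)) rev_lwindow -!map_comp.
  rewrite /morphx (nthcat_flatten (N := N)) ?revWl ?nth_rev ?size_rev; try lia.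
    by congr nth; lia.
  by move=> i; rewrite size_rev size_morph_gt0.
- have -> : (Posz m - Posz (size Wl))%R = Posz (m - size Wl) by lia.
  have EWr : flatten (mkseq (fun i => morph s (x (Posz i))) N) = Wr.
    by rewrite /Wr /morphw -map_comp.
  rewrite /morphx (nthcat_flatten (N := N)) ?EWr //; last lia.
  by move=> i; apply: size_morph_gt0.
Qed.

Lemma lang_window (X : subshift) x N : X x -> lang X (window x N).
Proof.
move=> Xx; exists x; split => //; exists (- Posz N)%R => j.
by rewrite size_window => ltj; rewrite nth_window //; congr x; lia.
Qed.

Lemma occurs_morphx_window s x N L u R : morphw s (window x N) = L ++ u ++ R ->
  occurs_at u (morphx s x) (Posz (size L) - Posz (size (morphw s (lwindow x N))))%R.
Proof.
move=> EW k ltk.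
rewrite -(nth_cat_middle l1 L R ltk) -EW -morphx_window; first by congr morphx; lia.
by rewrite EW !size_cat ltn_add2l ltn_addr.
Qed.

Lemma lang_image_morphw s X v : lang X v -> lang (morph_image s X) (morphw s v).
Proof.
move=> [x [Xx [i occ]]]; set N := (`|i| + size v)%N; set off := absz (i + Posz N)%R.
have Ev : take (size v) (drop off (window x N)) = v.
  have size_v : size (take (size v) (drop off (window x N))) = size v.
    by rewrite size_take size_drop size_window; case: ifP => //; lia.
  apply: (@eq_from_nth _ l1) => // j; rewrite size_v => ltj.
  rewrite nth_take // nth_drop nth_window; last lia.
  by rewrite occ //; congr x; lia.
set L := take off (window x N); set R := drop (size v) (drop off (window x N)).
have EW : morphw s (window x N) = morphw s L ++ morphw s v ++ morphw s R.
  by rewrite -!morphw_cat -Ev !cat_take_drop.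
have occ_v := occurs_morphx_window EW.
exists (morphx s x); split; last by eexists; exact: occ_v.
exists x; split => //; exists 0; split; first exact: size_morph_gt0.
by move=> n; rewrite /shiftn GRing.addr0.
Qed.

Lemma lang_image_infix s X u v :
  lang X v -> infix u (morphw s v) -> lang (morph_image s X) u.
Proof. by move=> /(lang_image_morphw s) Lv uv; apply: lang_infix Lv. Qed.

Lemma lang_image_factor s X u :
  lang (morph_image s X) u -> exists2 v, lang X v & infix u (morphw s v).
Proof.
move=> [y [[x [Xx [k [_ Ey]]]] [i occ]]].
set p := (i + Posz k)%R; set N := (`|p| + size u)%N.
exists (window x N); first exact: lang_window.
have := size_morphw s (lwindow x N); have := size_morphw s (rwindow x N).
have := @morphx_window s x N; rewrite morphw_cat size_cat !size_mkseq.
set Wl := morphw s (lwindow x N); set Wr := morphw s (rwindow x N) => nthW leWr leWl.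
set off := absz (p + Posz (size Wl))%R.
suff -> : u = take (size u) (drop off (Wl ++ Wr)).
  exact: infix_trans (infix_take _ _) (infix_drop _ _).
apply: (@eq_from_nth _ l1) => [|j ltj].
  by rewrite size_take size_drop size_cat; case: ifP => //; lia.
rewrite nth_take // nth_drop -nthW ?size_cat; last lia.
by rewrite occ // Ey /shiftn; congr morphx; lia.
Qed.

Section Blocks.
Variables (T : Type) (U : eqType) (f : T -> seq U).
Local Notation F v := (flatten (map f v)).

Lemma cat_eq_cat (A B C D : seq U) : A ++ B = C ++ D -> size C <= size A ->
  exists2 M, A = C ++ M & D = M ++ B.
Proof.
elim: C A => [|c C IHC] A E le; first by exists A.
case: A E le => [|a A] //= [-> /IHC ex_M] /ex_M [M -> ->].
by exists M.
Qed.

Lemma flatten_map_prefix v u R : F v = u ++ R -> u != [::] ->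
  exists v1 b v2 pf t,
    [/\ v = v1 ++ b :: v2, f b = pf ++ t, pf != [::] & u = F v1 ++ pf].
Proof.
elim: v u => [|c v IHv] u /=; first by case: u.
move=> E u_neq0; case: (leqP (size u) (size (f c))) => [le|lt].
  by have [t Efc _] := cat_eq_cat E le; exists [::], c, v, u, t.
have [M Eu EM] := cat_eq_cat (esym E) (ltnW lt).
have [|v1 [b [v2 [pf [t [-> fb pf_neq0 EM']]]]]] := IHv M EM.
  by rewrite -size_eq0; move: lt; rewrite Eu size_cat; lia.
rewrite Eu EM'.
by exists (c :: v1), b, v2, pf, t; rewrite /= catA.
Qed.

Lemma flatten_map_suffix v L S : F v = L ++ S -> L != [::] ->
  exists v1 a v2 t sf,
    [/\ v = v1 ++ a :: v2, f a = t ++ sf, t != [::] & S = sf ++ F v2].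
Proof.
elim: v L => [|c v IHv] L /=; first by case: L.
move=> E L_neq0; case: (leqP (size L) (size (f c))) => [le|lt].
  by have [sf Efc ->] := cat_eq_cat E le; exists [::], c, v, L, sf.
have [M EL EM] := cat_eq_cat (esym E) (ltnW lt).
have [|v1 [a [v2 [t [sf [-> fa t_neq0 ->]]]]]] := IHv M EM.
  by rewrite -size_eq0; move: lt; rewrite EL size_cat; lia.
by exists (c :: v1), a, v2, t, sf.
Qed.

End Blocks.

Lemma l1_notin_proper_suffix s a t sf : morph s a = t ++ sf -> t != [::] -> l1 \notin sf.
Proof.
have [tl -> l1Ntl] := morph_head s a; case: t => [//|c t] [_ Etl] _.
by move: l1Ntl; rewrite Etl mem_cat negb_or => /andP [].
Qed.

(* Since [l1] occurs in an image only at the start of each block, a factor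
   containing [l1] cannot lie inside the proper suffix of a single block. *)
Lemma morphw_factor_ext s v L u R :
  morphw s v = L ++ u ++ R -> L != [::] -> l1 \in u ->
  exists v1 a v' b v2 sf pf,
    [/\ v = v1 ++ a :: v' ++ b :: v2,
        exists t, t != [::] /\ morph s a = t ++ sf,
        pf != [::] /\ exists t, morph s b = pf ++ t
      & u = sf ++ morphw s v' ++ pf].
Proof.
move=> E L_neq0 l1u.
have [v1 [a [v2 [t [sf [-> Ea t_neq0 EuR]]]]]] := flatten_map_suffix E L_neq0.
have l1Nsf := l1_notin_proper_suffix Ea t_neq0.
have lt_sf_u : size sf < size u.
  rewrite ltnNge; apply/negP => /(cat_eq_cat (esym EuR)) [M Esf _].
  by move: l1Nsf; rewrite Esf mem_cat l1u.
have [M Eu EM] := cat_eq_cat EuR (ltnW lt_sf_u).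
have [|v' [b [v3 [pf [t' [-> Eb pf_neq0 EM']]]]]] := flatten_map_prefix EM.
  by apply: contraTneq lt_sf_u => M0; rewrite Eu M0 cats0 ltnn.
exists v1, a, v', b, v3, sf, pf; split => //; first by exists t.
  by split => //; exists t'.
by rewrite Eu EM'.
Qed.

Lemma ext_image_of_lang s X u : lang (morph_image s X) u -> l1 \in u ->
  exists2 v, lang X v & ext_image s X u v.
Proof.
move=> Lu l1u; have [v0 Lv0 /infixP [L [R Ev0]]] := lang_image_factor Lu.
have [c Lcv0] := lang_extl Lv0.
have cL_neq0 : morph s c ++ L != [::].
  by rewrite -size_eq0 size_cat -lt0n ltn_addr ?size_morph_gt0.
have E : morphw s (c :: v0) = (morph s c ++ L) ++ u ++ R.
  by rewrite morphw_cons Ev0 -catA.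
have [v1 [a [v [b [v2 [sf [pf [Ecv0 Ea Eb Eu]]]]]]]] := morphw_factor_ext E cL_neq0 l1u.
have Lavb : lang X (a :: rcons v b).
  by apply: lang_infix Lcv0; apply/infixP; exists v1, v2; rewrite Ecv0 /= cat_rcons.
exists v; first exact: lang_behead (lang_belast (w := a :: v) Lavb).
split => //; first by case: (u) l1u.
by exists a, b, sf, pf.
Qed.


Lemma ppath_cat (T : Type) (e : T -> T -> Prop) x p q :
  ppath e x (p ++ q) <-> ppath e x p /\ ppath e (last x p) q.
Proof.
elim: p x => [|y p IHp] x /=; first by split => // [[]].
by rewrite IHp; split => [[? []] | [[]]].
Qed.

Lemma ppath_nth (T : Type) (e : T -> T -> Prop) x0 x p i :
  ppath e x p -> i < size p -> e (nth x0 (x :: p) i) (nth x0 (x :: p) i.+1).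
Proof. by elim: p x i => [//|y p IHp] x [|i] /= [exy pp] lti //; apply: IHp. Qed.

Lemma ppath_path (T : Type) (e : T -> T -> Prop) (A : rel T) x p :
  (forall u v, e u v <-> A u v) -> path A x p -> ppath e x p.
Proof. by move=> eA; elim: p x => //= y p IHp x /andP [/eA exy /IHp]. Qed.

Section Graphs.
Variables (V : vtx -> Prop) (e : vtx -> vtx -> Prop).
Hypothesis e_sym : forall u v, e u v -> e v u.

(* A vertex of maximal depth on a cycle would have two distinct neighbours
   of smaller depth. *)
Lemma acyclic_of_depth (d : vtx -> nat) :
  (forall u v, e u v -> d u != d v) ->
  (forall u v1 v2, e u v1 -> e u v2 -> d v1 < d u -> d v2 < d u -> v1 = v2) ->
  graph_acyclic V e.
Proof.
move=> e_d parentP [x [p [_ _ uniq_c size_c cyc]]].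
set c := x :: p in uniq_c size_c; set n := size c; have n_gt0 : 0 < n by [].
have step i : i < n -> e (nth x c i) (nth x c i.+1).
  move=> lti; have := ppath_nth x cyc (i := i).
  by rewrite -rcons_cons !nth_rcons_default size_rcons; apply.
have [i lti maxi] : exists2 i, i < n & forall j, j < n -> d (nth x c j) <= d (nth x c i).
  case: (@arg_maxnP _ (Ordinal n_gt0) xpredT (fun j => d (nth x c j)) isT) => i _ maxi.
  by exists i => // j ltj; apply: (maxi (Ordinal ltj)).
set y := nth x c i.
have below j : j < n -> e y (nth x c j) -> d (nth x c j) < d y.
  by move=> ltj eyj; rewrite ltn_neqAle maxi // andbT eq_sym e_d.
pose nx := if i.+1 < n then i.+1 else 0.
pose pv := if i is j.+1 then j else n.-1.
have lt_nx : nx < n by rewrite /nx; case: ifP.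
have lt_pv : pv < n by rewrite /pv; case: i lti {maxi y below nx lt_nx pv} => [|j]; lia.
have e_nx : e y (nth x c nx).
  have := step i lti; rewrite /nx; case: ifP => // /negbT.
  by rewrite -leqNgt => le_n; rewrite (nth_default _ le_n).
have e_pv : e y (nth x c pv).
  apply: e_sym; rewrite /pv /y; case: i lti {maxi y below lt_pv lt_nx e_nx nx pv} => [|j] lti.
    by have := step n.-1; rewrite prednK // (nth_default _ (leqnn n)); apply.
  by apply: step; lia.
have := parentP _ _ _ e_nx e_pv (below _ lt_nx e_nx) (below _ lt_pv e_pv).
move/eqP; rewrite nth_uniq // /nx /pv.
by case: i lti {maxi y below lt_pv lt_nx e_nx e_pv nx pv} => [|j]; case: ifP; lia.
Qed.

Lemma connected_of_center r : V r -> (forall v, V v -> v = r \/ e r v) -> graph_connected V e.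
Proof.
move=> Vr center u v Vu Vv.
have [pu [pp_u last_u]] : exists pu, ppath e u pu /\ last u pu = r.
  case: (center u Vu) => [->|/e_sym eur]; first by exists [::].
  by exists [:: r].
have [pv [pp_v last_v]] : exists pv, ppath e r pv /\ last r pv = v.
  case: (center v Vv) => [->|erv]; first by exists [::].
  by exists [:: v].
by exists (pu ++ pv); rewrite ppath_cat last_cat last_u.
Qed.

Lemma star_tree r : V r -> (forall v, V v -> v = r \/ e r v) ->
  (forall u v, e u v -> (u == r) != (v == r)) -> is_tree V e.
Proof.
move=> Vr center through_r; split; first exact: connected_of_center center.
apply: (@acyclic_of_depth (fun v => v != r)) => [u v /through_r|u v1 v2 _ _].
  by case: (u == r); case: (v == r).
by case: (v1 =P r) => [->|_]; case: (v2 =P r) => [->|_] //; case: (u != r).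
Qed.

End Graphs.

Section ExtensionGraph.
Variables (Z : subshift) (w : word).

Lemma ext_edge_sym u v : ext_edge Z w u v -> ext_edge Z w v u.
Proof. by case: u; case: v. Qed.

Lemma ext_edge_vertex u v : ext_edge Z w u v -> is_vertex Z w u /\ is_vertex Z w v.
Proof.
have ends a b : lang Z (a :: rcons w b) -> lang Z (a :: w) /\ lang Z (rcons w b).
  by move=> Lawb; split; [exact: (lang_belast (w := a :: w) Lawb) | exact: lang_behead Lawb].
by case: u => a; case: v => b //= /ends [].
Qed.

Lemma vertex_edge u : is_vertex Z w u -> exists v, ext_edge Z w u v.
Proof.
case: u => [a /lang_extr [b Lawb]|b /lang_extl [a Lawb]]; first by exists (inr b).
by exists (inl a).
Qed.

Lemma dendric_of_left_unique : lang Z w ->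
  (forall a a', lang Z (a :: w) -> lang Z (a' :: w) -> a = a') -> dendric_word Z w.
Proof.
move=> Lw left_uniq; have [a0 La0w] := lang_extl Lw.
have edge_a0 a b : ext_edge Z w (inl a) (inr b) -> a = a0.
  by case/ext_edge_vertex => Law _; apply: left_uniq.
apply: (star_tree ext_edge_sym (r := inl a0)) => //.
- case=> [a|b] /= Lv; first by left; rewrite (left_uniq _ _ Lv La0w).
  have [[a e_ba|//]] := vertex_edge (u := inr b) Lv.
  by right; rewrite -(edge_a0 a b (ext_edge_sym e_ba)).
- by case=> [a|b] [a'|b'] //= E; rewrite (edge_a0 _ _ E) eqxx.
Qed.

Lemma dendric_of_right_unique : lang Z w ->
  (forall b b', lang Z (rcons w b) -> lang Z (rcons w b') -> b = b') -> dendric_word Z w.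
Proof.
move=> Lw right_uniq; have [b0 Lwb0] := lang_extr Lw.
have edge_b0 a b : ext_edge Z w (inl a) (inr b) -> b = b0.
  by case/ext_edge_vertex => _ Lwb; apply: right_uniq.
apply: (star_tree ext_edge_sym (r := inr b0)) => //.
- case=> [a|b] /= Lv; last by left; rewrite (right_uniq _ _ Lv Lwb0).
  have [[//|b e_ab]] := vertex_edge (u := inl a) Lv.
  by right; rewrite -(edge_b0 a b e_ab).
- by case=> [a|b] [a'|b'] //= E; rewrite (edge_b0 _ _ E) eqxx.
Qed.

Lemma dendric_of_not_bispecial : lang Z w -> ~ bispecial Z w -> dendric_word Z w.
Proof.
move=> Lw not_bisp.
case: (classic (exists a a' : letter, a != a' /\ lang Z (a :: w) /\ lang Z (a' :: w))).
  move=> left_special; apply: dendric_of_right_unique => // b b' Lwb Lwb'.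
  by case: (eqVneq b b') => // neq_bb'; case: not_bisp; split => //; exists b, b'.
move=> not_left_special; apply: dendric_of_left_unique => // a a' Law La'w.
by case: (eqVneq a a') => // neq_aa'; case: not_left_special; exists a, a'.
Qed.

End ExtensionGraph.

Lemma infix_catP (T : eqType) (u A B : seq T) : infix u (A ++ B) ->
  [\/ infix u A, infix u B |
     exists k, [/\ 0 < k < size u, suffix (take k u) A & prefix (drop k u) B]].
Proof.
move=> /infixP [L [R E]]; case: (leqP (size A) (size L)) => [leAL|ltLA].
  have [M _ ->] := cat_eq_cat (esym E) leAL.
  by constructor 2; apply/infixP; exists M, R.
have [M EA EuR] := cat_eq_cat E (ltnW ltLA).
case: (leqP (size u) (size M)) => [leuM|ltMu].
  have [M' EM _] := cat_eq_cat (esym EuR) leuM.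
  by constructor 1; apply/infixP; exists L, M'; rewrite EA EM.
have [N Eu EB] := cat_eq_cat EuR (ltnW ltMu).
constructor 3; exists (size M); split.
- by rewrite ltMu andbT; move: ltLA; rewrite EA size_cat; lia.
- by rewrite Eu take_size_cat // EA suffix_suffix.
- by rewrite Eu drop_size_cat // EB prefix_prefix.
Qed.

(* Every image block is followed by [l1], so a factor of an image whose
   interior avoids [l1] lies inside some [rcons (morph s c) l1]. *)
Lemma infix_morphw_block s v a w b : l1 \notin w ->
  infix (a :: rcons w b) (morphw s v) ->
  exists c, infix (a :: rcons w b) (rcons (morph s c) l1).
Proof.
move=> l1Nw; elim: v => [//|c v IHv].
rewrite morphw_cons => /infix_catP [in_c|/IHv //|[k [/andP [k_gt0 lt_k] suf pre]]].
  by exists c; apply: infix_trans in_c (infix_rcons _ _).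
set P := take k _ in suf; set Q := drop k _ in pre.
have EPQ : P ++ Q = a :: rcons w b by rewrite cat_take_drop.
have P_neq0 : P != [::] by rewrite -size_eq0 size_take lt_k -lt0n.
have Q_neq0 : Q != [::] by rewrite -size_eq0 size_drop subn_eq0 -ltnNge.
exists c; case: v pre {IHv} => [|d v]; first by rewrite prefixs0 (negbTE Q_neq0).
rewrite morphw_cons; have [t -> _] := morph_head s d.
case: Q Q_neq0 EPQ => [//|y Q] _ EPQ; rewrite prefix_cons => /andP [/eqP Ey _].
case: P P_neq0 EPQ suf => [//|x P] _ [<- EwbPQ] suf; rewrite Ey in EwbPQ.
case/lastP: Q EwbPQ => [|Q y'].
  rewrite cats1 => /rcons_inj [<- <-].
  by apply: suffixW; rewrite -rcons_cons suffix_rcons eqxx.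
rewrite -[l1 :: _]rcons_cons -rcons_cat => /rcons_inj [Ew _].
by case/negP: l1Nw; rewrite -Ew mem_cat inE eqxx orbT.
Qed.

Lemma letterP (c : letter) : [\/ c = l1, c = l2 | c = l3].
Proof.
by case: c => -[|[|[|//]]] lt_c; [constructor 1|constructor 2|constructor 3]; apply: val_inj.
Qed.

Lemma letter_neqE : ((l1 == l2) = false) * ((l1 == l3) = false) * ((l2 == l1) = false) *
  ((l2 == l3) = false) * ((l3 == l1) = false) * ((l3 == l2) = false).
Proof. by []. Qed.

Definition letters : seq letter := [:: l1; l2; l3].

Lemma mem_letters c : c \in letters.
Proof. by case: (letterP c) => ->. Qed.

Definition image_edge s w (a b : letter) : bool :=
  has (fun c => infix (a :: rcons w b) (rcons (morph s c) l1)) letters.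

Definition edge_rel (E : letter -> letter -> bool) : rel vtx := fun u v =>
  match u, v with inl a, inr b | inr b, inl a => E a b | _, _ => false end.

Lemma ext_edge_avoiding_l1 s X w : (forall c, lang X [:: c]) -> l1 \notin w ->
  forall u v, ext_edge (morph_image s X) w u v <-> edge_rel (image_edge s w) u v.
Proof.
move=> letters_X l1Nw.
suff edgeP a b : lang (morph_image s X) (a :: rcons w b) <-> image_edge s w a b.
  by case=> a [a'|b'] //=; apply: edgeP.
split.
  case/lang_image_factor => v _ /(infix_morphw_block l1Nw) [c in_c].
  by apply/hasP; exists c; first exact: mem_letters.
case/hasP => c _ in_c; have [d Lcd] := lang_extr (letters_X c).
apply: (lang_image_infix Lcd); apply: infix_trans in_c _.
have [t Ed _] := morph_head s d.
by apply/infixP; exists [::], t; rewrite /morphw /= Ed cats0 -cats1 -catA.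
Qed.

Definition vertices : seq vtx := [seq inl a | a <- letters] ++ [seq inr b | b <- letters].

Lemma mem_vertices v : v \in vertices.
Proof. by case: v => c; case: (letterP c) => ->. Qed.

Definition bfs_step (A : rel vtx) (S : seq vtx) : seq vtx :=
  undup (S ++ [seq v <- vertices | has (A^~ v) S]).

Definition reachable (A : rel vtx) u : seq vtx := iter (size vertices) (bfs_step A) [:: u].

Lemma reachable_path A u v : v \in reachable A u -> exists2 p, path A u p & last u p = v.
Proof.
rewrite /reachable; elim: (size vertices) v => [|n IHn] v /=.
  by rewrite inE => /eqP ->; exists [::].
rewrite /bfs_step mem_undup mem_cat => /orP [/IHn //|].
rewrite mem_filter => /andP [/hasP [x /IHn [p pp_x last_x] Axv] _].
by exists (rcons p v); rewrite ?last_rcons // rcons_path pp_x last_x.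
Qed.

Definition bfs_depth (A : rel vtx) root v : nat :=
  find (fun n => v \in iter n (bfs_step A) [:: root]) (iota 0 (size vertices)).

Definition tree_root (A : rel vtx) : vtx :=
  head (inl l1) [seq u <- vertices | has (A u) vertices].

(* Any depths satisfying the first two conditions witness acyclicity; BFS
   depths from a root satisfy them exactly when the graph is a tree. *)
Definition tree_criterion (A : rel vtx) (d : vtx -> nat) (R : vtx -> seq vtx) : bool :=
  [&& all (fun u => all (fun v => A u v ==> (d u != d v)) vertices) vertices,
      all (fun u => all (fun v1 => all (fun v2 =>
        [&& A u v1, A u v2, d v1 < d u & d v2 < d u] ==> (v1 == v2))
        vertices) vertices) vertices
    & all (fun u => all (fun v =>
        [&& has (A u) vertices & has (A v) vertices] ==> (v \in R u))
        vertices) vertices].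

Lemma dendric_of_tree_criterion Z w (A : rel vtx) d R :
  (forall u v, ext_edge Z w u v <-> A u v) ->
  (forall u v, v \in R u -> exists2 p, path A u p & last u p = v) ->
  tree_criterion A d R -> dendric_word Z w.
Proof.
move=> eA R_path /and3P [depth_edge depth_parent conn].
have forall2 (P : vtx -> vtx -> bool) :
    all (fun u => all (P u) vertices) vertices -> forall u v, P u v.
  by move=> /allP allP2 u v; apply: (allP (allP2 u (mem_vertices u))); apply: mem_vertices.
have has_edge u x : ext_edge Z w u x -> has (A u) vertices.
  by move=> /eA Aux; apply/hasP; exists x; first exact: mem_vertices.
split.
- move=> u v /vertex_edge [x /has_edge Eu] /vertex_edge [y /has_edge Ev].
  have := forall2 _ conn u v; rewrite Eu Ev /=.
  by case/R_path => p /(ppath_path eA) pp_p last_p; exists p.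
- apply: (acyclic_of_depth (@ext_edge_sym Z w) (d := d)).
    by move=> u v /eA Auv; have := forall2 _ depth_edge u v; rewrite Auv.
  move=> u v1 v2 /eA Auv1 /eA Auv2 lt1 lt2; apply/eqP.
  have := allP (forall2 _ depth_parent u v1) v2 (mem_vertices v2).
  by rewrite Auv1 Auv2 lt1 lt2.
Qed.

Definition tabulate (T : Type) (x0 : T) (f : vtx -> T) : vtx -> T :=
  let t := [seq f v | v <- vertices] in fun v => nth x0 t (index v vertices).

Lemma tabulateE (T : Type) (x0 : T) f : tabulate x0 f =1 f.
Proof.
by move=> v; rewrite /tabulate (nth_map (inl l1)) ?nth_index ?index_mem ?mem_vertices.
Qed.

(* The tables make [vm_compute], which is call-by-value, evaluate the
   relation, the depths and the reachable sets only once. *)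
Definition tree_check (A : rel vtx) : bool :=
  let At := tabulate (fun _ => false) (fun u => tabulate false (A u)) in
  tree_criterion At (tabulate 0 (bfs_depth At (tree_root At))) (tabulate [::] (reachable At)).

Lemma dendric_of_tree_check Z w (A : rel vtx) :
  (forall u v, ext_edge Z w u v <-> A u v) -> tree_check A -> dendric_word Z w.
Proof.
move=> eA; apply: dendric_of_tree_criterion => [u v|u v].
  by rewrite !tabulateE.
by rewrite tabulateE; apply: reachable_path.
Qed.

Lemma dendric_avoiding_l1 s X w (E : letter -> letter -> bool) :
  (forall c, lang X [:: c]) -> l1 \notin w ->
  image_edge s w =2 E -> tree_check (edge_rel E) -> dendric_word (morph_image s X) w.
Proof.
move=> letters_X l1Nw eqE; apply: dendric_of_tree_check => u v.
by rewrite ext_edge_avoiding_l1 //; case: u => a; case: v => b //=; rewrite eqE.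
Qed.

Definition short_words : seq word :=
  [:: [::]; [:: l2]; [:: l3]; [:: l2; l2]; [:: l2; l3]; [:: l3; l2]; [:: l3; l3]].

Lemma short_words_avoiding_l1 w : l1 \notin w -> size w <= 2 -> w \in short_words.
Proof.
case: w => [|x [|y [|//]]] // l1Nw _;
  by case: (letterP x) l1Nw => ->; try case: (letterP y) => ->.
Qed.

Lemma image_edge_long s w : (forall c, size (morph s c) <= 3) -> 2 < size w ->
  image_edge s w =2 (fun _ _ => false).
Proof.
move=> size_le3 lt2w a b; apply/negbTE/hasP => -[c _ /size_infix].
rewrite /= !size_rcons ltnS => le_w_c.
by have := leq_trans le_w_c (size_le3 c); rewrite ltnS leqNgt lt2w.
Qed.

Lemma dendric_avoiding_l1_short s X w :
  (forall c, size (morph s c) <= 3) ->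
  all (fun w => tree_check (edge_rel (image_edge s w))) short_words ->
  (forall c, lang X [:: c]) -> l1 \notin w -> dendric_word (morph_image s X) w.
Proof.
move=> size_le3 checks letters_X l1Nw; case: (leqP (size w) 2) => [le2w|lt2w].
  apply: dendric_avoiding_l1 (allP checks w _) => //.
  exact: short_words_avoiding_l1.
by apply: dendric_avoiding_l1 (image_edge_long size_le3 lt2w) _; vm_compute.
Qed.

Lemma short_word_checks :
  all (fun s => all (fun w => tree_check (edge_rel (image_edge s w))) short_words)
    [:: Alpha; Beta; Gamma; Eta].
Proof. by vm_compute. Qed.

Lemma prefix_nseq3 j m b : prefix (rcons (nseq j l3) b) (rcons (nseq m l3) l1) =
  (j < m) && (b == l3) || (j == m) && (b == l1).
Proof. by elim: j m => [|j IHj] [|m] //=; rewrite ?andbT ?orbF ?IHj ?prefix0s ?andbT. Qed.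

Lemma infix_nseq3 a j m b : infix (a :: rcons (nseq j l3) b) (rcons (nseq m l3) l1) =
  (a == l3) && ((j.+1 < m) && (b == l3) || (j < m) && (b == l1)).
Proof.
elim: m => [|m IHm]; first by case: j => [|j] /=; rewrite ?andbF ?orbF.
rewrite -[nseq m.+1 l3]/(l3 :: nseq m l3) rcons_cons infix_consl IHm prefix_cons prefix_nseq3.
by case: (a == l3); case: (b == l3); case: (b == l1) => //=; lia.
Qed.

Lemma infix_block1 a j m b :
  infix (a :: rcons (nseq j l3) b) (l1 :: rcons (nseq m l3) l1) =
  (a == l1) && ((j < m) && (b == l3) || (j == m) && (b == l1))
  || infix (a :: rcons (nseq j l3) b) (rcons (nseq m l3) l1).
Proof. by rewrite infix_consl prefix_cons prefix_nseq3. Qed.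

Lemma infix_block12 a j m b :
  infix (a :: rcons (nseq j l3) b) (l1 :: l2 :: rcons (nseq m l3) l1) =
  [|| (a == l1) && (j == 0) && (b == l2),
      (a == l2) && ((j < m) && (b == l3) || (j == m) && (b == l1))
    | infix (a :: rcons (nseq j l3) b) (rcons (nseq m l3) l1)].
Proof.
rewrite infix_consl prefix_cons infix_consl prefix_cons prefix_nseq3 -andbA.
by case: j => [|j] /=; rewrite ?prefix0s ?andbT ?andbF.
Qed.

Lemma image_edge_delta k j a b : image_edge (Delta k) (nseq j l3) a b =
  [|| infix (a :: rcons (nseq j l3) b) (l1 :: rcons (nseq 0 l3) l1),
      infix (a :: rcons (nseq j l3) b) (l1 :: l2 :: rcons (nseq k l3) l1)
    | infix (a :: rcons (nseq j l3) b) (l1 :: l2 :: rcons (nseq k.+1 l3) l1)].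
Proof. by rewrite /image_edge /= orbF. Qed.

Lemma image_edge_zeta k j a b : image_edge (Zeta k) (nseq j l3) a b =
  [|| infix (a :: rcons (nseq j l3) b) (l1 :: rcons (nseq k l3) l1),
      infix (a :: rcons (nseq j l3) b) (l1 :: l2 :: rcons (nseq 0 l3) l1)
    | infix (a :: rcons (nseq j l3) b) (l1 :: rcons (nseq k.+1 l3) l1)].
Proof. by rewrite /image_edge /= orbF. Qed.

(* A representative with the same comparisons of [j] against [0], [k] and [k.+1]. *)
Definition nseq_rep k j : nat * nat :=
  if j == 0 then (1, 0) else if j < k then (2, 1) else if j == k then (1, 1)
  else if j == k.+1 then (1, 2) else (1, 3).

Lemma image_edge_nseq_rep (f : nat -> S3) k j : f = Delta \/ f = Zeta -> 0 < k ->
  image_edge (f k) (nseq j l3) =2 image_edge (f (nseq_rep k j).1) (nseq (nseq_rep k j).2 l3).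
Proof.
move=> f_dz k_gt0 a b; case: f_dz => ->;
  rewrite ?image_edge_delta ?image_edge_zeta !infix_block1 !infix_block12 !infix_nseq3;
  rewrite /nseq_rep; do 4?(case: ifP => ?);
  by case: (letterP a) => ->; case: (letterP b) => ->; rewrite /= ?eqxx ?letter_neqE; lia.
Qed.

Lemma infix_cons_head (T : eqType) (x a y : T) z s :
  infix (a :: z) (x :: s) -> y \in z -> y \notin behead s -> a = x.
Proof.
rewrite infix_consl prefix_cons => /orP [/andP [/eqP -> _] //|in_s] yz.
case: s in_s => [//|x' s] in_s /negP []; apply: mem_infix yz.
by move: in_s; rewrite infix_consl prefix_cons => /orP [/andP [_ /prefixW] | /consl_infix].
Qed.

Lemma delta_zeta_block (f : nat -> S3) k c : f = Delta \/ f = Zeta ->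
  exists2 t, rcons (morph (f k) c) l1 = l1 :: t & l2 \notin behead t.
Proof.
have l2Nnseq m : l2 \notin rcons (nseq m l3) l1.
  by rewrite mem_rcons inE mem_nseq !letter_neqE andbF.
case=> ->; case: (letterP c) => ->.
- by exists [:: l1].
- by exists (l2 :: rcons (nseq k l3) l1); last exact: l2Nnseq.
- by exists (l2 :: rcons (nseq k.+1 l3) l1); last exact: l2Nnseq.
- by exists (rcons (nseq k l3) l1) => //; apply: contra (l2Nnseq k); apply: mem_behead.
- by exists [:: l2; l1].
- by exists (rcons (nseq k.+1 l3) l1) => //; apply: contra (l2Nnseq k.+1); apply: mem_behead.
Qed.

Definition nseq_reps : seq (nat * nat) := [:: (1, 0); (2, 1); (1, 1); (1, 2); (1, 3)].

Lemma nseq_rep_in k j : nseq_rep k j \in nseq_reps.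
Proof. by rewrite /nseq_rep; do 4?case: ifP. Qed.

Lemma nseq_rep_checks (f : nat -> S3) : f = Delta \/ f = Zeta ->
  all (fun r => tree_check (edge_rel (image_edge (f r.1) (nseq r.2 l3)))) nseq_reps.
Proof. by case=> ->; vm_compute. Qed.

Lemma dendric_nseq3 (f : nat -> S3) k X j : f = Delta \/ f = Zeta -> 0 < k ->
  (forall c, lang X [:: c]) -> dendric_word (morph_image (f k) X) (nseq j l3).
Proof.
move=> f_dz k_gt0 letters_X.
apply: dendric_avoiding_l1 (image_edge_nseq_rep j f_dz k_gt0) _ => //.
  by rewrite mem_nseq letter_neqE andbF.
exact: allP (nseq_rep_checks f_dz) _ (nseq_rep_in k j).
Qed.

Lemma dendric_avoiding_l1_with_l2 (f : nat -> S3) k X w : f = Delta \/ f = Zeta ->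
  (forall c, lang X [:: c]) -> l1 \notin w -> l2 \in w -> lang (morph_image (f k) X) w ->
  dendric_word (morph_image (f k) X) w.
Proof.
move=> f_dz letters_X l1Nw l2w Lw.
suff left_l1 a : lang (morph_image (f k) X) (a :: w) -> a = l1.
  by apply: dendric_of_left_unique => // a a' /left_l1 -> /left_l1 ->.
case/(vertex_edge (u := inl a)) => -[//|b].
rewrite /= -[lang _ _]/(ext_edge _ w (inl a) (inr b)) ext_edge_avoiding_l1 //=.
case/hasP => c _; have [t -> l2Nt] := delta_zeta_block k c f_dz.
move=> in_c; apply: (infix_cons_head in_c _ l2Nt).
by rewrite mem_rcons inE l2w orbT.
Qed.

Lemma dendric_avoiding_l1_delta_zeta (f : nat -> S3) k X w : f = Delta \/ f = Zeta ->
  0 < k -> (forall c, lang X [:: c]) -> l1 \notin w -> lang (morph_image (f k) X) w ->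
  dendric_word (morph_image (f k) X) w.
Proof.
move=> f_dz k_gt0 letters_X l1Nw Lw; case: (boolP (l2 \in w)) => [l2w|l2Nw].
  exact: dendric_avoiding_l1_with_l2.
have -> : w = nseq (size w) l3.
  apply/all_pred1P/allP => c cw; case: (letterP c) cw => -> //.
  - by rewrite (negbTE l1Nw).
  - by rewrite (negbTE l2Nw).
exact: dendric_nseq3.
Qed.

Lemma dendric_avoiding_l1_in_image s X w : in_S3 s -> (forall c, lang X [:: c]) ->
  l1 \notin w -> lang (morph_image s X) w -> dendric_word (morph_image s X) w.
Proof.
case: s => [||||k|k] /= s_in letters_X l1Nw Lw; last 2 first.
- by apply: dendric_avoiding_l1_delta_zeta => //; left.
- by apply: dendric_avoiding_l1_delta_zeta => //; right.
all: apply: dendric_avoiding_l1_short => //; first by move=> c; case: (letterP c) => ->.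
all: by have /and4P [? ? ? ?] := short_word_checks.
Qed.

Theorem lemma5p5 (X : subshift) (s : S3) :
  shift_space X -> dendric_shift X -> in_S3 s ->
  (dendric_shift (morph_image s X) <-> DP X s).
Proof.
move=> [_ _ letters_X] _ s_in; split => [dendric_Y v _ u [_ Lu _ _] _|DP_s w Lw].
  exact: dendric_Y.
have [bisp|not_bisp] := classic (bispecial (morph_image s X) w); last first.
  exact: dendric_of_not_bispecial.
have [l1w|l1Nw] := boolP (l1 \in w); last exact: dendric_avoiding_l1_in_image.
by have [v Lv ext_wv] := ext_image_of_lang Lw l1w; apply: DP_s ext_wv bisp.
Qed.
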